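(* Let $\mathcal{H}$ be a separable Hilbert space, let $\{f_n\}_{n=1}^\infty$ be a pseudo-frame in $\mathcal{H}$, and let $\{g_n\}_{n=1}^\infty$ be a pseudo-dual sequence of $\{f_n\}$ which is a Bessel sequence. Then $\{g_n\}$ is a pseudo-frame.
   Context: A Bessel sequence in $\mathcal{H}$ is called a pseudo-frame if it becomes a frame for $\mathcal{H}$ after adding finitely many appropriate vectors of $\mathcal{H}$ to it. A sequence $\{g_n\}$ in $\mathcal{H}$ is a pseudo-dual sequence of the Bessel sequence $\{f_n\}$ if $f=\sum_{n=1}^\infty\langle f,g_n\rangle f_n$ holds for every $f$ belonging to some finite-codimensional subspace of $\mathcal{H}$. *)

From mathcomp Require Import all_boot all_algebra.
From mathcomp Require Import all_classical all_reals all_analysis.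
From mathcomp Require Export complex.
Set Implicit Arguments.
Unset Strict Implicit.
Unset Printing Implicit Defensive.
Import GRing.Theory Num.Theory numFieldNormedType.Exports.
Local Open Scope ring_scope.
Local Open Scope classical_set_scope.

Section Hilbert.
Variables (R : realType) (H : lmodType R[i]) (ip : H -> H -> R[i]).

Definition is_inner_product : Prop :=
  [/\ (forall (a : R[i]) (x y z : H), ip (a *: x + y) z = a * ip x z + ip y z),
      (forall x y : H, ip x y = conjc (ip y x)),
      (forall x : H, 0 <= complex.Re (ip x x))
    & (forall x : H, ip x x = 0 -> x = 0)].

Definition ipnorm (x : H) : R := Num.sqrt (complex.Re (ip x x)).

Definition ip_complete : Prop :=
  forall u : nat -> H,
    (forall e : R, 0 < e -> exists N, forall m n, (N <= m)%N -> (N <= n)%N ->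
         ipnorm (u m - u n) < e) ->
    exists l : H, (fun n => ipnorm (u n - l)) @ \oo --> (0 : R).

Definition hilbert_space : Prop := is_inner_product /\ ip_complete.

Definition ip_separable : Prop :=
  exists d : nat -> H, forall (x : H) (e : R), 0 < e -> exists n, ipnorm (x - d n) < e.

Definition sqmod (z : R[i]) : R := complex.Re z ^+ 2 + complex.Im z ^+ 2.

Definition frame_sum (f : nat -> H) (x : H) : \bar R :=
  (\sum_(0 <= n <oo) (sqmod (ip x (f n)))%:E)%E.

Definition bessel (f : nat -> H) : Prop :=
  exists2 B : R, 0 < B &
    forall x : H, (frame_sum f x <= (B * ipnorm x ^+ 2)%:E)%E.

Definition frame (f : nat -> H) : Prop :=
  exists A B : R, [/\ 0 < A, 0 < B &
    forall x : H, ((A * ipnorm x ^+ 2)%:E <= frame_sum f x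
                   <= (B * ipnorm x ^+ 2)%:E)%E].

Definition add_vectors (hs : seq H) (f : nat -> H) : nat -> H :=
  fun n => if (n < size hs)%N then nth 0 hs n else f (n - size hs)%N.

Definition pseudo_frame (f : nat -> H) : Prop :=
  bessel f /\ exists hs : seq H, frame (add_vectors hs f).

Definition subspace (M : set H) : Prop :=
  M 0 /\ forall (a : R[i]) (x y : H), M x -> M y -> M (a *: x + y).

(* finite codimension: H = M + span{v_1,...,v_k} for finitely many v_i *)
Definition finite_codim (M : set H) : Prop :=
  exists (k : nat) (v : 'I_k -> H), forall x : H,
    exists2 m : H, M m & exists c : 'I_k -> R[i], x = m + \sum_(i < k) c i *: v i.

Definition pseudo_dual (f g : nat -> H) : Prop :=
  exists M : set H, [/\ subspace M, finite_codim M &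
    forall x : H, M x ->
      (fun N => ipnorm (x - \sum_(n < N) ip x (g n) *: f n)) @ \oo --> (0 : R)].

End Hilbert.

From mathcomp Require Import all_boot all_order all_algebra.
From mathcomp Require Import all_classical all_reals all_analysis.
From mathcomp Require Import complex.
From mathcomp.algebra_tactics Require Import ring lra.
Import GRing.Theory Num.Theory Order.TTheory numFieldNormedType.Exports.
Set Implicit Arguments.
Unset Strict Implicit.
Unset Printing Implicit Defensive.
Local Open Scope ring_scope.
Local Open Scope classical_set_scope.

(* Since f and g are Bessel and H is complete, the mixed frame operator
   S x = sum_n <x, g_n> f_n is a bounded linear operator, and S is the identity
   on the finite-codimensional subspace M where g is a pseudo-dual of f.  Hence
   x - S x always lies in the finite-dimensional span of the defects
   v_i - S v_i of vectors v_1, ..., v_k complementing M; let e_1, ..., e_m be an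
   orthonormal basis of it (Gram-Schmidt).  Now split
   <x, x> = <S x, x> + <x - S x, x>: the first term is at most
   (sum_n |<x, g_n>|^2)^(1/2) sqrt(B_f) ||x|| by Cauchy-Schwarz and the Bessel
   bound of f, and expanding x - S x in the e_j bounds the second by
   m (1 + sqrt(B_f B_g)) ||x|| max_j |<x, e_j>|.  Dividing by ||x|| gives a
   lower frame bound for g with e_1, ..., e_m added in front. *)

Local Notation normc := Normc.normc.

Section ComplexModulus.
Variable R : rcfType.
Implicit Types (z : R[i]) (a : R).

Lemma normc_ge0 z : 0 <= normc z.
Proof. by case: z => a b; exact: sqrtr_ge0. Qed.

Lemma normr_normc z : `|z| = (normc z)%:C%C.
Proof. by case: z. Qed.

Lemma normc_real a : normc a%:C%C = `|a|.
Proof. by rewrite /= expr0n addr0 sqrtr_sqr. Qed.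

Lemma normc_conj z : normc z^*%C = normc z.
Proof. by apply: complexI; rewrite -!normr_normc normcJ. Qed.

Lemma Re_le_normc z : complex.Re z <= normc z.
Proof. by apply: le_trans (ler_norm _) _; rewrite -lecR -normr_normc normc_ge_Re. Qed.

Lemma ler_normc_sum (I : Type) (r : seq I) (P : pred I) (F : I -> R[i]) :
  normc (\sum_(i <- r | P i) F i) <= \sum_(i <- r | P i) normc (F i).
Proof. exact: (@ler_norm_sum _ (Rcomplex R)). Qed.

End ComplexModulus.

Lemma sqmod_normc (R : realType) (z : R[i]) : sqmod z = normc z ^+ 2.
Proof. by case: z => a b; rewrite /sqmod sqr_sqrtr // addr_ge0 ?sqr_ge0. Qed.

Lemma sqmod_ge0 (R : realType) (z : R[i]) : 0 <= sqmod z.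
Proof. by rewrite sqmod_normc sqr_ge0. Qed.

Lemma CauchySchwarz_sum (R : realDomainType) (I : eqType) (r : seq I) (a b : I -> R) :
  (\sum_(i <- r) a i * b i) ^+ 2 <= (\sum_(i <- r) a i ^+ 2) * (\sum_(i <- r) b i ^+ 2).
Proof.
set S := \sum_(i <- r) a i * b i.
have A_ge0 : 0 <= \sum_(i <- r) a i ^+ 2 by apply: sumr_ge0 => i _; exact: sqr_ge0.
have [A0|A_neq0] := eqVneq (\sum_(i <- r) a i ^+ 2) 0.
  have a0 i : i \in r -> a i = 0.
    move=> ri; apply/eqP; rewrite -sqrf_eq0; move/eqP: A0.
    by rewrite psumr_eq0 => [/allP/(_ i ri)|j _]; rewrite ?sqr_ge0.
  by rewrite /S big_seq big1 => [|i /a0 ->]; rewrite ?mul0r // expr0n A0 mul0r.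
have expand (s t : R) : \sum_(i <- r) (s * a i - t * b i) ^+ 2 =
    s ^+ 2 * \sum_(i <- r) a i ^+ 2 - 2 * s * t * S + t ^+ 2 * \sum_(i <- r) b i ^+ 2.
  by rewrite /S !mulr_sumr -sumrB -big_split; apply: eq_bigr => i _ /=; ring.
set A := \sum_(i <- r) a i ^+ 2; set B := \sum_(i <- r) b i ^+ 2.
have : 0 <= A * (A * B - S ^+ 2).
  have -> : A * (A * B - S ^+ 2) = \sum_(i <- r) (S * a i - A * b i) ^+ 2.
    by rewrite expand -/A -/B; ring.
  by apply: sumr_ge0 => i _; exact: sqr_ge0.
by rewrite pmulr_rge0 ?lt_def ?A_neq0 // subr_ge0 mulrC.
Qed.

Lemma normc_sum_mul_le (R : realType) (I : eqType) (r : seq I) (a c : I -> R[i]) :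
  normc (\sum_(i <- r) a i * c i) <=
  Num.sqrt (\sum_(i <- r) sqmod (a i)) * Num.sqrt (\sum_(i <- r) sqmod (c i)).
Proof.
apply: le_trans (ler_normc_sum _ _ _) _.
have sum_sqmod_ge0 (d : I -> R[i]) : 0 <= \sum_(i <- r) sqmod (d i).
  by apply: sumr_ge0 => i _; exact: sqmod_ge0.
rewrite -(@ler_pXn2r _ 2) ?nnegrE ?mulr_ge0 ?sqrtr_ge0 ?sumr_ge0 // => [|i _]; last first.
  exact: normc_ge0.
rewrite exprMn !sqr_sqrtr //.
under eq_bigr do rewrite Normc.normcM.
under [X in _ <= X * _]eq_bigr do rewrite sqmod_normc.
under [X in _ <= _ * X]eq_bigr do rewrite sqmod_normc.
exact: CauchySchwarz_sum.
Qed.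

Lemma bounded_series_tail_lt (R : realType) (b : nat -> R) (C : R) :
    (forall n, 0 <= b n) -> (forall N, \sum_(n < N) b n <= C) ->
  forall e, 0 < e -> exists N, forall m n, (N <= m)%N -> \sum_(m <= i < n) b i < e.
Proof.
move=> b_ge0 bC e e_gt0.
have : cvgn (series b).
  apply: nondecreasing_is_cvgn; first by apply: nondecreasing_series => n _ _.
  by exists C => _ [N _ <-]; rewrite /series /= big_mkord.
move/cvg_cauchy/cauchy_seriesP/(_ e e_gt0) => -[[A B] /= [[NA _ A_inf] [NB _ B_inf]] AB].
exists (maxn NA NB) => m n /[dup] /(leq_trans (leq_maxl _ _)) NAm /(leq_trans (leq_maxr _ _)) NBm.
have [mn|nm] := leqP m n; last by rewrite big_geq // ltnW.
have mn_AB : (A `*` B) (m, n) by split; [exact: A_inf | exact/B_inf/(leq_trans NBm)].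
exact: le_lt_trans (ler_norm _) (AB _ mn_AB).
Qed.

Lemma lincomb_morph (K : pzRingType) (V W : lmodType K) (F : V -> W) :
    (forall a x y, F (a *: x + y) = a *: F x + F y) ->
  forall (I : Type) (r : seq I) (c : I -> K) (v : I -> V),
  F (\sum_(i <- r) c i *: v i) = \sum_(i <- r) c i *: F (v i).
Proof.
move=> FZD I r c v.
have F0 : F 0 = 0.
  have := FZD 1 0 0; rewrite !scale1r addr0 => /(congr1 (fun w => w - F 0)).
  by rewrite addrK subrr => ->.
have FD x y : F (x + y) = F x + F y by rewrite -(scale1r x) FZD !scale1r.
have FZ a x : F (a *: x) = a *: F x by rewrite -[a *: x]addr0 FZD F0 addr0.
by rewrite (big_morph F FD F0); apply: eq_bigr => i _; rewrite FZ.
Qed.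

Lemma sum_mkseq (T : Type) (R : nmodType) (F : T -> R) (e : nat -> T) m :
  \sum_(h <- mkseq e m) F h = \sum_(j < m) F (e j).
Proof. by rewrite /mkseq -val_enum_ord -map_comp big_map big_enum. Qed.

Section InnerProductSpace.
Variables (R : realType) (H : lmodType R[i]) (ip : H -> H -> R[i]).
Hypothesis ipP : is_inner_product ip.
Local Notation "`| x |_ip" := (ipnorm ip x) (format "`| x |_ip").

Lemma ipDZl (a : R[i]) x y z : ip (a *: x + y) z = a * ip x z + ip y z.
Proof. by case: ipP. Qed.

Lemma ipC x y : ip x y = (ip y x)^*%C.
Proof. by case: ipP. Qed.

Lemma ip0l z : ip 0 z = 0.
Proof.
have := ipDZl 1 0 0 z; rewrite scale1r addr0 mul1r => /(congr1 (fun w => w - ip 0 z)).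
by rewrite addrK subrr => ->.
Qed.

Lemma ipDl x y z : ip (x + y) z = ip x z + ip y z.
Proof. by rewrite -(scale1r x) ipDZl mul1r scale1r. Qed.

Lemma ipZl (a : R[i]) x z : ip (a *: x) z = a * ip x z.
Proof. by rewrite -[a *: x]addr0 ipDZl ip0l addr0. Qed.

Lemma ipBl x y z : ip (x - y) z = ip x z - ip y z.
Proof. by rewrite ipDl -scaleN1r ipZl mulN1r. Qed.

Lemma ip_suml (I : Type) (r : seq I) (P : pred I) (F : I -> H) z :
  ip (\sum_(i <- r | P i) F i) z = \sum_(i <- r | P i) ip (F i) z.
Proof. by apply: (big_morph (fun x => ip x z)) => [x y|]; rewrite ?ipDl ?ip0l. Qed.

Lemma ip0r z : ip z 0 = 0.
Proof. by rewrite ipC ip0l conjc0. Qed.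

Lemma ipDr x y z : ip x (y + z) = ip x y + ip x z.
Proof. by rewrite ipC ipDl rmorphD /= -!ipC. Qed.

Lemma ipZr (a : R[i]) x z : ip x (a *: z) = a^*%C * ip x z.
Proof. by rewrite ipC ipZl rmorphM /= -ipC. Qed.

Lemma ipBr x y z : ip x (y - z) = ip x y - ip x z.
Proof. by rewrite ipC ipBl rmorphB /= -!ipC. Qed.

Lemma ip_self x : ip x x = (`|x|_ip ^+ 2)%:C%C.
Proof.
have Re_ge0 : 0 <= complex.Re (ip x x) by case: ipP.
rewrite /ipnorm sqr_sqrtr //; have := ipC x x.
by case: (ip x x) => a b /= [Im0]; congr (_ +i* _)%C; lra.
Qed.

Lemma ipnorm_ge0 x : 0 <= `|x|_ip.
Proof. exact: sqrtr_ge0. Qed.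

Lemma ipnorm0 : `|0|_ip = 0.
Proof. by rewrite /ipnorm ip0l; exact: sqrtr0. Qed.

Lemma ipnorm_eq0 x : `|x|_ip = 0 -> x = 0.
Proof. by move=> x0; case: ipP => _ _ _; apply; rewrite ip_self x0 expr0n. Qed.

Lemma ipnorm_gt0 x : x != 0 -> 0 < `|x|_ip.
Proof.
by move=> x0; rewrite lt_def ipnorm_ge0 andbT; apply: contra x0 => /eqP/ipnorm_eq0 ->.
Qed.

Lemma ipnormZ (a : R[i]) x : `|a *: x|_ip = normc a * `|x|_ip.
Proof.
apply: (@pexpIrn _ 2) => //; rewrite ?nnegrE ?mulr_ge0 ?normc_ge0 ?ipnorm_ge0 //.
apply: complexI; rewrite -ip_self ipZl ipZr mulrA ip_self exprMn rmorphM /=.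
by rewrite rmorphM /= !rmorphXn /= -sqr_normc normr_normc -expr2.
Qed.

Lemma ipnormN x : `|- x|_ip = `|x|_ip.
Proof.
by rewrite -scaleN1r ipnormZ -(rmorphN1 (real_complex R)) normc_real normrN1 mul1r.
Qed.

Lemma ipdistC x y : `|x - y|_ip = `|y - x|_ip.
Proof. by rewrite -opprB ipnormN. Qed.

Lemma normc_ipC x y : normc (ip x y) = normc (ip y x).
Proof. by rewrite ipC normc_conj. Qed.

Lemma CauchySchwarz_ip x y : normc (ip x y) <= `|x|_ip * `|y|_ip.
Proof.
have [->|y0] := eqVneq y 0; first by rewrite ip0r Normc.normc0 mulr_ge0 ?ipnorm_ge0.
set c := ip x y; set b := `|y|_ip ^+ 2.
have b_gt0 : 0 < b by rewrite exprn_gt0 ?ipnorm_gt0.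
have c_conj : c^*%C * c = (normc c)%:C%C * (normc c)%:C%C.
  by rewrite mulrC -sqr_normc normr_normc expr2.
(* [ip y y *: x - c *: y] is orthogonal to [y]. *)
have pyth : `|ip y y *: x - c *: y|_ip ^+ 2 = b * (b * `|x|_ip ^+ 2 - normc c ^+ 2).
  apply: complexI; rewrite -ip_self ipBl !ipBr !ipZl !ipZr -(ipC y y) (ipC y x) -/c.
  by rewrite !ip_self -/b !rmorphM !rmorphB /= !rmorphM /= -c_conj; ring.
have : 0 <= b * (b * `|x|_ip ^+ 2 - normc c ^+ 2) by rewrite -pyth; exact: sqr_ge0.
rewrite pmulr_rge0 // subr_ge0 => le_c.
rewrite -(@ler_pXn2r _ 2) ?nnegrE ?mulr_ge0 ?normc_ge0 ?ipnorm_ge0 //.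
by rewrite exprMn mulrC.
Qed.

Lemma ipnorm_le_ip_self u c : 0 <= c -> normc (ip u u) <= c * `|u|_ip -> `|u|_ip <= c.
Proof.
move=> c_ge0; have [->|u_neq0] := eqVneq u 0; first by rewrite ipnorm0.
move=> le_c; rewrite -(ler_pM2r (ipnorm_gt0 u_neq0)) -expr2; apply: le_trans le_c.
by rewrite -[X in X <= _]/(complex.Re ((`|u|_ip ^+ 2)%:C%C)) -ip_self Re_le_normc.
Qed.

Lemma ipnormD x y : `|x + y|_ip <= `|x|_ip + `|y|_ip.
Proof.
rewrite -(@ler_pXn2r _ 2) // ?nnegrE ?addr_ge0 ?ipnorm_ge0 //.
have expand : ip (x + y) (x + y) = ip x x + (ip x y + (ip x y)^*%C) + ip y y.
  by rewrite ipDl !ipDr (ipC y x); ring.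
have Re2 : ip x y + (ip x y)^*%C = (2 * complex.Re (ip x y))%:C%C.
  by rewrite addcJ rmorphM /= rmorph_nat.
move: expand; rewrite Re2 !ip_self -!rmorphD => /complexI ->.
have := Re_le_normc (ip x y); have := CauchySchwarz_ip x y; rewrite sqrrD; nra.
Qed.

Lemma sum_sqmod_le_frame_sum (f : nat -> H) x m N :
  ((\sum_(m <= n < N) sqmod (ip x (f n)))%:E <= frame_sum ip f x)%E.
Proof.
apply: (@le_trans _ _ (\sum_(0 <= n < N) sqmod (ip x (f n)))%:E).
  rewrite lee_fin; have [mN|Nm] := leqP m N; last first.
    by rewrite big_geq ?(ltnW Nm) // sumr_ge0 // => n _; exact: sqmod_ge0.
  by rewrite (big_cat_nat (leq0n m) mN) /= lerDr sumr_ge0 // => n _; exact: sqmod_ge0.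
by rewrite -sumEFin; apply: nneseries_lim_ge => n _ _; rewrite lee_fin sqmod_ge0.
Qed.

Lemma frame_sum_add_vectors (hs : seq H) (f : nat -> H) x :
  frame_sum ip (add_vectors hs f) x =
  ((\sum_(h <- hs) sqmod (ip x h))%:E + frame_sum ip f x)%E.
Proof.
rewrite /frame_sum (nneseries_split 0 (size hs)) => [|n _]; last by rewrite lee_fin sqmod_ge0.
congr (_ + _)%E.
  rewrite add0n sumEFin big_mkord (big_nth 0) big_mkord; congr (_%:E).
  by apply: eq_bigr => i _; rewrite /add_vectors ltn_ord.
rewrite add0n -nneseries_addn => [|n]; last by rewrite lee_fin sqmod_ge0.
by apply: eq_eseriesr => n _; rewrite /add_vectors ltnNge leq_addl /= addnK.
Qed.

Section Bessel.
Variables (f : nat -> H) (B : R).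
Hypotheses (B_gt0 : 0 < B) (f_bessel : forall x, (frame_sum ip f x <= (B * `|x|_ip ^+ 2)%:E)%E).

Lemma bessel_sum_le x m N : \sum_(m <= n < N) sqmod (ip x (f n)) <= B * `|x|_ip ^+ 2.
Proof. by rewrite -lee_fin (le_trans (sum_sqmod_le_frame_sum _ _ _ _)). Qed.

Lemma bessel_ip_sum_le (a : nat -> R[i]) y m N :
  normc (\sum_(m <= n < N) a n * ip (f n) y) <=
  Num.sqrt (\sum_(m <= n < N) sqmod (a n)) * (Num.sqrt B * `|y|_ip).
Proof.
apply: le_trans (normc_sum_mul_le _ _ _) (ler_wpM2l (sqrtr_ge0 _) _).
have B_ge0 := ltW B_gt0.
rewrite -[`|y|_ip](ger0_norm (ipnorm_ge0 _)) -sqrtr_sqr -sqrtrM //.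
rewrite ler_sqrt ?mulr_ge0 ?ipnorm_ge0 //.
under eq_bigr do rewrite !sqmod_normc normc_ipC -sqmod_normc.
exact: bessel_sum_le.
Qed.

Lemma bessel_synthesis_le (a : nat -> R[i]) m N :
  `|\sum_(m <= n < N) a n *: f n|_ip <= Num.sqrt (\sum_(m <= n < N) sqmod (a n)) * Num.sqrt B.
Proof.
apply: ipnorm_le_ip_self; first by rewrite mulr_ge0 ?sqrtr_ge0.
rewrite -mulrA {1}ip_suml; under eq_bigr do rewrite ipZl.
exact: bessel_ip_sum_le.
Qed.

End Bessel.

Definition ip_cvg (u : nat -> H) (l : H) := (fun n => `|u n - l|_ip) @ \oo --> (0 : R).

Lemma ip_cvg_unique u l l' : ip_cvg u l -> ip_cvg u l' -> l = l'.
Proof.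
move=> ul ul'; apply/eqP; rewrite -subr_eq0; apply/eqP/ipnorm_eq0/eqP.
have : `|l - l'|_ip <= 0 + 0.
  apply: (ler_cvg_to (cvg_cst _) (cvgD ul ul')); apply: nearW => n /=.
  have -> : l - l' = (l - u n) + (u n - l') by rewrite addrA subrK.
  by apply: le_trans (ipnormD _ _) _; rewrite (ipdistC l).
by rewrite addr0 eq_le ipnorm_ge0 andbT.
Qed.

Lemma ip_cvgZD (a : R[i]) u v l l' :
  ip_cvg u l -> ip_cvg v l' -> ip_cvg (fun n => a *: u n + v n) (a *: l + l').
Proof.
move=> ul vl'; apply: (@squeeze_cvgr _ _ _ _ (cst 0)
  (fun n => normc a * `|u n - l|_ip + `|v n - l'|_ip)); last 2 first.
- exact: cvg_cst.
- by rewrite -[0](addr0 0) -{1}(mulr0 (normc a)); exact: cvgD (cvgM (cvg_cst _) ul) vl'.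
apply: nearW => n /=; rewrite ipnorm_ge0 /=.
have -> : a *: u n + v n - (a *: l + l') = a *: (u n - l) + (v n - l').
  by rewrite scalerBr opprD addrACA.
by rewrite -ipnormZ ipnormD.
Qed.

Lemma normc_ip_cvg_le u l y c :
  ip_cvg u l -> (forall n, normc (ip (u n) y) <= c) -> normc (ip l y) <= c.
Proof.
move=> ul le_c; have : normc (ip l y) <= 0 * `|y|_ip + c.
  apply: (ler_cvg_to (cvg_cst _) (cvgD (cvgM ul (cvg_cst _)) (cvg_cst _))).
  apply: nearW => n /=.
  have -> : ip l y = ip (l - u n) y + ip (u n) y by rewrite -ipDl subrK.
  apply: le_trans (le_normcD _ _) (lerD _ (le_c n)).
  by apply: le_trans (CauchySchwarz_ip _ _) _; rewrite (ipdistC l).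
by rewrite mul0r add0r.
Qed.

Hypothesis ip_completeP : ip_complete ip.

Lemma bessel_synthesis_cvg (f : nat -> H) (B : R) (a : nat -> R[i]) (C : R) :
    0 < B -> (forall x, (frame_sum ip f x <= (B * `|x|_ip ^+ 2)%:E)%E) ->
    (forall N, \sum_(n < N) sqmod (a n) <= C) ->
  exists l, ip_cvg (fun N => \sum_(n < N) a n *: f n) l.
Proof.
move=> B_gt0 f_bessel aC; apply: ip_completeP => e e_gt0.
have [N tail_lt] := bounded_series_tail_lt (fun n => sqmod_ge0 (a n)) aC
  (divr_gt0 (exprn_gt0 2 e_gt0) B_gt0).
have cauchy m n : (N <= m)%N -> (m <= n)%N ->
    `|\sum_(k < n) a k *: f k - \sum_(k < m) a k *: f k|_ip < e.
  move=> Nm mn; have := sub_series_geq (fun k => a k *: f k) mn.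
  rewrite seriesEord /= => ->.
  apply: le_lt_trans (bessel_synthesis_le B_gt0 f_bessel _ _ _) _.
  rewrite -sqrtrM ?sumr_ge0 // => [|k _]; last exact: sqmod_ge0.
  rewrite -[e in _ < e](ger0_norm (ltW e_gt0)) -sqrtr_sqr ltr_sqrt ?exprn_gt0 //.
  by rewrite -ltr_pdivlMr //; exact: tail_lt.
exists N => m n Nm Nn; have [mn|/ltnW nm] := leqP m n.
  by rewrite ipdistC; exact: cauchy.
exact: cauchy.
Qed.

Definition mixed_sum (f g : nat -> H) N x := \sum_(n < N) ip x (g n) *: f n.

Lemma mixed_sumZD f g N a x y :
  mixed_sum f g N (a *: x + y) = a *: mixed_sum f g N x + mixed_sum f g N y.
Proof.
rewrite /mixed_sum scaler_sumr -big_split; apply: eq_bigr => n _ /=.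
by rewrite ipDZl scalerDl scalerA.
Qed.

Lemma ip_mixed_suml f g N x y :
  ip (mixed_sum f g N x) y = \sum_(n < N) ip x (g n) * ip (f n) y.
Proof. by rewrite ip_suml; apply: eq_bigr => n _; rewrite ipZl. Qed.

Local Notation proj m e := (mixed_sum e e m).

Definition orthonormal_upto m (e : nat -> H) :=
  forall i j, (i < m)%N -> (j < m)%N -> ip (e i) (e j) = (i == j)%:R.

Lemma orthonormal_ipnorm m e j : orthonormal_upto m e -> (j < m)%N -> `|e j|_ip = 1.
Proof.
move=> e_on jm; apply: (@pexpIrn _ 2) => //; rewrite ?nnegrE ?ipnorm_ge0 // expr1n.
by apply: complexI; rewrite -ip_self e_on // eqxx.
Qed.

Lemma ip_proj m e x j : orthonormal_upto m e -> (j < m)%N -> ip (proj m e x) (e j) = ip x (e j).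
Proof.
move=> e_on jm; rewrite ip_mixed_suml (bigD1 (Ordinal jm)) //= e_on // eqxx mulr1.
rewrite big1 ?addr0 // => k; rewrite -val_eqE /= => /negbTE kj.
by rewrite e_on // kj mulr0.
Qed.

Lemma ip_proj_orth m e x w :
  (forall j, (j < m)%N -> ip w (e j) = 0) -> ip (proj m e x) w = 0.
Proof.
move=> w_orth; rewrite ip_mixed_suml big1 // => j _.
by rewrite (ipC (e j)) w_orth // conjc0 mulr0.
Qed.

Lemma orthonormal_extend m e z : orthonormal_upto m e ->
  exists m' e', [/\ orthonormal_upto m' e', proj m' e' z = z &
                    forall x, proj m e x = x -> proj m' e' x = x].
Proof.
move=> e_on; set w := z - proj m e z.
have w_orth j : (j < m)%N -> ip w (e j) = 0 by move=> jm; rewrite ipBl ip_proj ?subrr.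
have [w0|w_neq0] := eqVneq w 0.
  by exists m, e; split=> //; apply/eqP; rewrite eq_sym -subr_eq0 -/w w0.
have w_gt0 := ipnorm_gt0 w_neq0.
pose en := (`|w|_ip^-1)%:C%C *: w.
pose e' n := if n == m then en else e n.
have e'E j : (j < m)%N -> e' j = e j by move=> jm; rewrite /e' ltn_eqF.
have e'm : e' m = en by rewrite /e' eqxx.
have en_orth j : (j < m)%N -> ip en (e j) = 0 by move=> jm; rewrite ipZl w_orth ?mulr0.
have ip_w_en : ip w en = (`|w|_ip)%:C%C.
  by rewrite ipZr conjc_real ip_self -rmorphM /= expr2 mulKf ?gt_eqF.
have proj_e' x : proj m.+1 e' x = proj m e x + ip x en *: en.
  rewrite /mixed_sum big_ord_recr /= e'm; congr (_ + _).
  by apply: eq_bigr => j _; rewrite e'E.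
exists m.+1, e'; split.
- move=> i j; rewrite ltnS leq_eqVlt => /predU1P[->|im];
    rewrite ltnS leq_eqVlt => /predU1P[->|jm].
  + by rewrite e'm eqxx ipZl ip_w_en -rmorphM /= mulVf ?gt_eqF.
  + by rewrite e'm e'E // en_orth // gtn_eqF.
  + by rewrite e'm e'E // (ipC _ en) en_orth // conjc0 ltn_eqF.
  + by rewrite !e'E // e_on.
- rewrite proj_e' -[X in ip X en](subrK (proj m e z)) ipDl -/w ip_w_en.
  rewrite (ip_proj_orth _ en_orth) addr0 scalerA -rmorphM /= mulfV ?gt_eqF //.
  by rewrite scale1r addrC subrK.
- move=> x projx; rewrite proj_e' -[X in ip X en]projx.
  by rewrite (ip_proj_orth _ en_orth) scale0r addr0.
Qed.

Lemma gram_schmidt k (z : 'I_k -> H) :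
  exists m e, orthonormal_upto m e /\ forall i, proj m e (z i) = z i.
Proof.
elim: k z => [|k IHk] z; first by exists 0%N, (fun=> 0); split=> [i j|[]].
have [m [e [e_on z_proj]]] := IHk (fun i => z (lift ord0 i)).
have [m' [e' [e'_on z0_proj proj_ext]]] := orthonormal_extend (z ord0) e_on.
exists m', e'; split=> // i; have [j ->|->] := unliftP ord0 i; last exact: z0_proj.
exact/proj_ext/z_proj.
Qed.

Section MixedFrameOperator.
Variables (f g : nat -> H) (Bf Bg : R).
Hypotheses (Bf_gt0 : 0 < Bf) (Bg_gt0 : 0 < Bg).
Hypothesis f_bessel : forall x, (frame_sum ip f x <= (Bf * `|x|_ip ^+ 2)%:E)%E.
Hypothesis g_bessel : forall x, (frame_sum ip g x <= (Bg * `|x|_ip ^+ 2)%:E)%E.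

(* [xget] picks the limit of the partial sums, which exists by [mixed_op_cvg]. *)
Definition mixed_op x := xget 0 (ip_cvg (mixed_sum f g ^~ x)).

Local Notation S := mixed_op.

Lemma mixed_op_cvg x : ip_cvg (mixed_sum f g ^~ x) (S x).
Proof.
rewrite /mixed_op; apply: xgetPex.
apply: (bessel_synthesis_cvg (a := fun n => ip x (g n)) (C := Bg * `|x|_ip ^+ 2) Bf_gt0 f_bessel).
by move=> N; have := bessel_sum_le g_bessel x 0 N; rewrite big_mkord.
Qed.

Lemma mixed_opZD a x y : S (a *: x + y) = a *: S x + S y.
Proof.
apply: (ip_cvg_unique (mixed_op_cvg _)).
rewrite (_ : mixed_sum f g ^~ _ = fun N => a *: mixed_sum f g N x + mixed_sum f g N y).
  exact: (ip_cvgZD a (mixed_op_cvg x) (mixed_op_cvg y)).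
by apply/funext => N; exact: mixed_sumZD.
Qed.

Lemma mixed_op_id x : (fun N => `|x - mixed_sum f g N x|_ip) @ \oo --> 0 -> S x = x.
Proof.
move=> x_cvg; apply: (ip_cvg_unique (mixed_op_cvg x)).
by rewrite /ip_cvg; under eq_fun do rewrite ipdistC.
Qed.

Lemma normc_ip_mixed_op_le x y C :
    (forall N, \sum_(n < N) sqmod (ip x (g n)) <= C) ->
  normc (ip (S x) y) <= Num.sqrt C * (Num.sqrt Bf * `|y|_ip).
Proof.
move=> xC; apply: (normc_ip_cvg_le (mixed_op_cvg x)) => N; rewrite ip_mixed_suml.
have := bessel_ip_sum_le Bf_gt0 f_bessel (fun n => ip x (g n)) y 0 N.
rewrite !big_mkord => /le_trans; apply.
rewrite ler_wpM2r ?mulr_ge0 ?sqrtr_ge0 ?ipnorm_ge0 // ler_sqrt ?xC //.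
by apply: le_trans (xC 0%N); rewrite big_ord0.
Qed.

Lemma ipnorm_mixed_op_le x : `|S x|_ip <= Num.sqrt Bg * `|x|_ip * Num.sqrt Bf.
Proof.
apply: ipnorm_le_ip_self; first by rewrite !mulr_ge0 ?sqrtr_ge0 ?ipnorm_ge0.
apply: le_trans (normc_ip_mixed_op_le (C := Bg * `|x|_ip ^+ 2) _ _) _.
  by move=> N; have := bessel_sum_le g_bessel x 0 N; rewrite big_mkord.
by rewrite sqrtrM ?(ltW Bg_gt0) // sqrtr_sqr ger0_norm ?ipnorm_ge0 // !mulrA.
Qed.

Lemma sub_mixed_op_lincomb k (v : 'I_k -> H) (c : 'I_k -> R[i]) m : S m = m ->
  (m + \sum_i c i *: v i) - S (m + \sum_i c i *: v i) = \sum_i c i *: (v i - S (v i)).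
Proof.
move=> Sm; rewrite -{2}(scale1r m) mixed_opZD scale1r Sm (lincomb_morph mixed_opZD).
rewrite opprD addrACA subrr add0r -sumrB.
by apply: eq_bigr => i _; rewrite scalerBr.
Qed.

Let defect_const := 1 + Num.sqrt Bg * Num.sqrt Bf.

Lemma ipnorm_sub_mixed_op_le x : `|x - S x|_ip <= defect_const * `|x|_ip.
Proof.
apply: le_trans (ipnormD _ _) _; rewrite ipnormN /defect_const mulrDl mul1r lerD2l.
by rewrite mulrAC ipnorm_mixed_op_le.
Qed.

Let frame_const m := Num.sqrt Bf + m%:R * defect_const.

Lemma frame_const_gt0 m : 0 < frame_const m.
Proof.
have : 0 <= m%:R * defect_const by rewrite !mulr_ge0 ?addr_ge0 ?sqrtr_ge0.
have : 0 < Num.sqrt Bf by rewrite sqrtr_gt0.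
rewrite /frame_const; lra.
Qed.

Lemma ipnorm_le_frame_coeffs m e x t :
    orthonormal_upto m e -> proj m e (x - S x) = x - S x -> 0 <= t ->
    (forall j, (j < m)%N -> sqmod (ip x (e j)) <= t) ->
    (forall N, \sum_(n < N) sqmod (ip x (g n)) <= t) ->
  `|x|_ip <= frame_const m * Num.sqrt t.
Proof.
move=> e_on defect_proj t_ge0 xe_le xg_le.
apply: ipnorm_le_ip_self; first by rewrite mulr_ge0 ?sqrtr_ge0 ?(ltW (frame_const_gt0 m)).
have -> : ip x x = ip (S x) x + ip (x - S x) x by rewrite -ipDl addrC subrK.
apply: le_trans (le_normcD _ _) _.
have Sx_le : normc (ip (S x) x) <= Num.sqrt t * (Num.sqrt Bf * `|x|_ip).
  exact: normc_ip_mixed_op_le.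
have defect_le : normc (ip (x - S x) x) <= m%:R * (defect_const * `|x|_ip * Num.sqrt t).
  rewrite -defect_proj ip_mixed_suml; apply: le_trans (ler_normc_sum _ _ _) _.
  set c := _ * Num.sqrt t.
  apply: (@le_trans _ _ (\sum_(j < m) c)); last by rewrite sumr_const card_ord mulr_natl.
  apply: ler_sum => j _; rewrite Normc.normcM; apply: ler_pM; rewrite ?normc_ge0 //.
    apply: le_trans (CauchySchwarz_ip _ _) _.
    by rewrite (orthonormal_ipnorm e_on (ltn_ord j)) mulr1 ipnorm_sub_mixed_op_le.
  rewrite normc_ipC -(@ler_pXn2r _ 2) ?nnegrE ?normc_ge0 ?sqrtr_ge0 //.
  by rewrite sqr_sqrtr // -sqmod_normc xe_le.
have -> : frame_const m * Num.sqrt t * `|x|_ip =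
    Num.sqrt t * (Num.sqrt Bf * `|x|_ip) + m%:R * (defect_const * `|x|_ip * Num.sqrt t).
  by rewrite /frame_const; ring.
exact: lerD.
Qed.

Lemma frame_sum_add_orthonormal_ge m e x :
    orthonormal_upto m e -> proj m e (x - S x) = x - S x ->
  ((frame_const m ^- 2 * `|x|_ip ^+ 2)%:E <= frame_sum ip (add_vectors (mkseq e m) g) x)%E.
Proof.
move=> e_on defect_proj.
have [G G_ge0 gE] : exists2 G, 0 <= G & frame_sum ip g x = G%:E.
  have g_ge0 : (0 <= frame_sum ip g x)%E.
    by apply: nneseries_ge0 => n _ _; rewrite lee_fin sqmod_ge0.
  exists (fine (frame_sum ip g x)); rewrite ?fine_ge0 // fineK // ge0_fin_numE //.
  exact: le_lt_trans (g_bessel x) (ltry _).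
set W := \sum_(j < m) sqmod (ip x (e j)).
have W_ge0 : 0 <= W by apply: sumr_ge0 => j _; exact: sqmod_ge0.
rewrite frame_sum_add_vectors sum_mkseq gE -EFinD lee_fin.
have t_ge0 : 0 <= W + G by rewrite addr_ge0.
have x_le : `|x|_ip <= frame_const m * Num.sqrt (W + G).
  apply: ipnorm_le_frame_coeffs e_on defect_proj t_ge0 _ _ => [j jm|N].
    rewrite /W (bigD1 (Ordinal jm)) //= -addrA lerDl addr_ge0 // sumr_ge0 // => i _.
    exact: sqmod_ge0.
  have := sum_sqmod_le_frame_sum g x 0 N; rewrite big_mkord gE lee_fin => /le_trans; apply.
  by rewrite lerDr.
rewrite mulrC ler_pdivrMr ?exprn_gt0 ?frame_const_gt0 //.
rewrite -(sqr_sqrtr t_ge0) -exprMn mulrC.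
by rewrite ler_pXn2r ?nnegrE ?ipnorm_ge0 ?mulr_ge0 ?sqrtr_ge0 // ltW ?frame_const_gt0.
Qed.

Lemma frame_sum_add_orthonormal_le m e x : orthonormal_upto m e ->
  (frame_sum ip (add_vectors (mkseq e m) g) x <= ((m%:R + Bg) * `|x|_ip ^+ 2)%:E)%E.
Proof.
move=> e_on; rewrite frame_sum_add_vectors mulrDl EFinD leeD // lee_fin sum_mkseq.
apply: (@le_trans _ _ (\sum_(j < m) `|x|_ip ^+ 2)); last by rewrite sumr_const card_ord mulr_natl.
apply: ler_sum => j _; rewrite sqmod_normc ler_pXn2r ?nnegrE ?normc_ge0 ?ipnorm_ge0 //.
by have := CauchySchwarz_ip x (e j); rewrite (orthonormal_ipnorm e_on (ltn_ord j)) mulr1.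
Qed.

Lemma pseudo_dual_add_vectors_frame k (v : 'I_k -> H) (M : set H) :
    (forall x, exists2 m, M m & exists c, x = m + \sum_i c i *: v i) ->
    (forall x, M x -> (fun N => `|x - mixed_sum f g N x|_ip) @ \oo --> 0) ->
  exists hs, frame ip (add_vectors hs g).
Proof.
move=> v_span fg_dual.
have [m [e [e_on z_proj]]] := gram_schmidt (fun i => v i - S (v i)).
exists (mkseq e m), (frame_const m ^- 2), (m%:R + Bg); split => [||x].
- by rewrite invr_gt0 exprn_gt0 ?frame_const_gt0.
- by rewrite ltr_wpDl.
have [mx Mx [cx ->]] := v_span x; apply/andP; split; last exact: frame_sum_add_orthonormal_le.
apply: frame_sum_add_orthonormal_ge => //.
rewrite sub_mixed_op_lincomb ?(mixed_op_id (fg_dual _ Mx)) // (lincomb_morph (mixed_sumZD e e m)).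
by apply: eq_bigr => i _; rewrite z_proj.
Qed.

End MixedFrameOperator.

End InnerProductSpace.

Theorem mainTheorem2 (R : realType) (H : lmodType R[i]) (ip : H -> H -> R[i])
    (hH : hilbert_space ip) (hsep : ip_separable ip) (f g : nat -> H) :
  pseudo_frame ip f -> pseudo_dual ip f g -> bessel ip g -> pseudo_frame ip g.
Proof.
move=> [[Bf Bf_gt0 f_bessel] _] [M [_ [k [v v_span]] fg_dual]] [Bg Bg_gt0 g_bessel].
have [ipP ip_completeP] := hH.
split; first by exists Bg.
exact: (pseudo_dual_add_vectors_frame ipP ip_completeP Bf_gt0 Bg_gt0 f_bessel g_bessel
          v_span fg_dual).
Qed.
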